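(* Let $\mathit{VI}$ be a finite set of variables with $\#\mathit{VI}=n$. For all $j,k\in\mathbb{N}$ with $1\le j\le k\le n$, we have $\mathit{TS}_j\subseteq\mathit{TSD}_k$.
   Context: $\mathit{SG}=\wp(\mathit{VI})\setminus\{\emptyset\}$ and $\mathit{SH}=\wp(\mathit{SG})$, ordered by set inclusion. For $S\in\mathit{SG}$, $\mathrm{tuples}_j(S)=\{T\subseteq S\mid \#T=j\}$, and for $sh\in\mathit{SH}$, $\mathrm{tuples}_j(sh)=\bigcup_{S'\in sh}\mathrm{tuples}_j(S')$. Define $\rho_{\mathit{TS}_j}(sh)=\{S\in\mathit{SG}\mid \mathrm{tuples}_j(S)\subseteq\mathrm{tuples}_j(sh)\}$ and $\mathit{TS}_j=\rho_{\mathit{TS}_j}(\mathit{SH})$. Define $\rho_{\mathit{TSD}_k}(sh)=\{\,S\in\mathit{SG}\mid \forall T\subseteq S:\ \#T<k\implies S=\bigcup\{U\in sh\mid T\subseteq U\subseteq S\}\,\}$ and $\mathit{TSD}_k=\rho_{\mathit{TSD}_k}(\mathit{SH})$. *)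

From mathcomp Require Import all_boot.
Set Implicit Arguments. Unset Strict Implicit. Unset Printing Implicit Defensive.

Section SharingDefs.
Variable VI : finType.

Definition is_SG (S : {set VI}) : bool := S != set0.

Definition is_SH (sh : {set {set VI}}) : bool := [forall S in sh, is_SG S].

Definition tuples (j : nat) (S : {set VI}) : {set {set VI}} :=
  [set T in powerset S | #|T| == j].

Definition tuplesSH (j : nat) (sh : {set {set VI}}) : {set {set VI}} :=
  \bigcup_(S' in sh) tuples j S'.

Definition rho_TS (j : nat) (sh : {set {set VI}}) : {set {set VI}} :=
  [set S | is_SG S & tuples j S \subset tuplesSH j sh].

Definition rho_TSD (k : nat) (sh : {set {set VI}}) : {set {set VI}} :=
  [set S | is_SG S &
     [forall T : {set VI}, (T \subset S) && (#|T| < k) ==>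
        (S == \bigcup_(U in sh | (T \subset U) && (U \subset S)) U)]].

Definition in_TS (j : nat) (sh : {set {set VI}}) : Prop :=
  exists sh0, is_SH sh0 /\ sh = rho_TS j sh0.

Definition in_TSD (k : nat) (sh : {set {set VI}}) : Prop :=
  exists sh0, is_SH sh0 /\ sh = rho_TSD k sh0.

End SharingDefs.

From mathcomp Require Import all_boot.

(* Every sh = rho_TS_j sh0 is a fixpoint of rho_TSD_k, hence lies in TSD_k.
   Each S of sh covers itself, so S is kept by rho_TSD_k.  Conversely, if S is
   kept and T is a j-subset of S, pick x in T: the (j-1)-subset T :\ x has
   fewer than k elements, so some U of sh with T :\ x \subset U \subset S
   contains x; then T is a j-subset of U, hence a j-tuple of sh0. *)

Set Implicit Arguments.
Unset Strict Implicit.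
Unset Printing Implicit Defensive.

Section TupleSharingClosure.

Variable VI : finType.
Implicit Types (S T U : {set VI}) (sh : {set {set VI}}).

Lemma rho_TS_SH j sh : is_SH (rho_TS j sh).
Proof. by apply/forallP => S; apply/implyP; rewrite inE => /andP[]. Qed.

Lemma rho_TS_tuplesSH j sh U T :
  U \in rho_TS j sh -> T \subset U -> #|T| = j -> T \in tuplesSH j sh.
Proof.
rewrite inE => /andP[_ /subsetP sub_tuples] TU cardT.
by apply: sub_tuples; rewrite inE powersetE TU cardT eqxx.
Qed.

Lemma mem_rho_TSD k sh S : S \in sh -> is_SG S -> S \in rho_TSD k sh.
Proof.
move=> shS SG_S; rewrite inE SG_S /=.
apply/forallP => T; apply/implyP => /andP[TS _].
rewrite eqEsubset; apply/andP; split.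
  by apply: (bigcup_max S); rewrite ?shS ?TS ?subxx.
by apply/bigcupsP => U /and3P[].
Qed.

Lemma rho_TSD_cover k sh S T x :
  S \in rho_TSD k sh -> T \subset S -> #|T| < k -> x \in S ->
  exists2 U, U \in sh & [/\ T \subset U, U \subset S & x \in U].
Proof.
rewrite inE => /andP[_ /forallP/(_ T)/implyP cover] TS ltTk.
rewrite {1}(eqP (cover _)) ?TS ?ltTk // => /bigcupP[U /and3P[shU TU US] xU].
by exists U.
Qed.

Lemma rho_TSD_rho_TS j k sh :
  0 < j <= k -> rho_TSD k (rho_TS j sh) = rho_TS j sh.
Proof.
case/andP=> j_gt0 le_jk; apply/setP => S; apply/idP/idP; last first.
  by move=> TS_S; apply: mem_rho_TSD => //; move: TS_S; rewrite inE => /andP[].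
move=> TSD_S; rewrite inE; apply/andP; split.
  by move: TSD_S; rewrite inE => /andP[].
apply/subsetP => T; rewrite inE powersetE => /andP[TS /eqP cardT].
have /set0Pn[x Tx] : T != set0 by rewrite -card_gt0 cardT.
have ltTxk : #|T :\ x| < k.
  by apply: leq_trans le_jk; rewrite -cardT (cardsD1 x T) Tx.
have [U TS_U [TxU _ Ux]] :=
  rho_TSD_cover TSD_S (subset_trans (subD1set T x) TS) ltTxk (subsetP TS x Tx).
apply: (rho_TS_tuplesSH TS_U) cardT.
by rewrite -(setD1K Tx) subUset sub1set Ux TxU.
Qed.

End TupleSharingClosure.

Theorem corollary3p12 (VI : finType) (n j k : nat) :
  #|VI| = n -> 1 <= j -> j <= k -> k <= n ->
  forall sh : {set {set VI}}, in_TS j sh -> in_TSD k sh.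
Proof.
move=> _ j_gt0 le_jk _ sh [sh0 [_ ->]].
exists (rho_TS j sh0); split; first exact: rho_TS_SH.
by rewrite rho_TSD_rho_TS ?j_gt0.
Qed.
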